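(* Let $n,k,d$ be integers with $1\le k\le d\le n-2$, set $s=d+1-k$, let $F$ be a finite field with $|F|\ge sn$, let $\{\lambda_{i,j}: i\in[n],\ j\in\{0,\dots,s-1\}\}$ be $sn$ distinct elements of $F$, and let $\mathcal{C}$ be the set of all $C=(C_1,\dots,C_n)$, $C_i=(c_{i,b,a}: b\in\{1,\dots,d+2-k\},\ a\in\{0,\dots,s^n-1\})$, satisfying $\sum_{i=1}^n \lambda_{i,a_i}^t c_{i,b,a}=0$ for all $t\in\{0,\dots,n-k-1\}$, $b\in\{1,\dots,d+2-k\}$, $a\in\{0,\dots,s^n-1\}$. Let $\mathcal{R}\subseteq[n]\setminus\{1,2\}$ with $|\mathcal{R}|=d$. Then for every $C\in\mathcal{C}$: (1) the values $\{c_{1,b,a}: a\in\{0,\dots,s^n-1\},\ b\in\{1,\dots,s\}\}\cup\{\sum_{j=0}^{s-2}c_{2,j+1,a(1,a_1\oplus j)}+c_{2,s,a(1,a_1\oplus(s-1))}: a\in\{0,\dots,s^n-1\}\}$ are uniquely determined by the values $\{\sum_{j=0}^{s-2}c_{i,j+1,a(1,a_1\oplus j)}+c_{i,s,a(1,a_1\oplus(s-1))}: a\in\{0,\dots,s^n-1\},\ i\in\mathcal{R}\}$; (2) the values $\{c_{2,b,a}: a\in\{0,\dots,s^n-1\},\ b\in\{1,\dots,s-1,s+1\}\}\cup\{\sum_{j=0}^{s-2}c_{1,j+1,a(2,a_2\oplus j)}+c_{1,s+1,a(2,a_2\oplus(s-1))}: a\in\{0,\dots,s^n-1\}\}$ are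 uniquely determined by the values $\{\sum_{j=0}^{s-2}c_{i,j+1,a(2,a_2\oplus j)}+c_{i,s+1,a(2,a_2\oplus(s-1))}: a\in\{0,\dots,s^n-1\},\ i\in\mathcal{R}\}$. (Here ''uniquely determined'' means: any two codewords of $\mathcal{C}$ that agree on the latter values agree on the former values.)
   Context: $[n]=\{1,\dots,n\}$. For $a\in\{0,\dots,s^n-1\}$, $(a_1,\dots,a_n)\in\{0,\dots,s-1\}^n$ denotes its $n$-digit $s$-ary expansion, and $a$ is identified with this tuple. For $i\in[n]$, $u\in\{0,\dots,s-1\}$, $a(i,u)$ denotes the element obtained from $a$ by replacing the $i$th digit $a_i$ by $u$; $\oplus$ denotes addition modulo $s$. Empty sums (when $s=1$) are zero. *)

From HB Require Import structures.
From mathcomp Require Import all_boot all_order all_algebra.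
Set Implicit Arguments. Unset Strict Implicit. Unset Printing Implicit Defensive.
Import GRing.Theory.
Local Open Scope ring_scope.

(* Elements a in {0,...,s^n-1} are identified with their digit tuples
   (a_1,...,a_n), here finite functions 'I_n -> 'I_s (node i+1 <-> ordinal i). *)

Lemma ord_pos (s : nat) (x : 'I_s) : (0 < s)%N.
Proof. by case: x => m H; exact: (leq_ltn_trans (leq0n m) H). Qed.

Definition oplus (s : nat) (x : 'I_s) (j : nat) : 'I_s :=
  Ordinal (ltn_pmod (x + j)%N (ord_pos x)).

Definition upd (n s : nat) (a : {ffun 'I_n -> 'I_s}) (i : 'I_n) (u : 'I_s)
  : {ffun 'I_n -> 'I_s} := [ffun l => if l == i then u else a l].

(* A candidate C = (c_{i,b,a}); column index b in {1,...,s+1} is stored as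
   the ordinal b-1 : 'I_(s.+1). *)
Definition codeword (F : Type) (n s : nat) :=
  'I_n -> 'I_s.+1 -> {ffun 'I_n -> 'I_s} -> F.

Definition in_code (F : nzRingType) (n k s : nat) (lam : 'I_n -> 'I_s -> F)
  (C : codeword F n s) : Prop :=
  forall (t : nat), (t < n - k)%N ->
  forall (b : 'I_s.+1) (a : {ffun 'I_n -> 'I_s}),
    \sum_(i < n) (lam i (a i)) ^+ t * C i b a = 0.

Definition rep (F : nzRingType) (n s : nat) (i0 : 'I_n) (bl : 'I_s.+1)
  (C : codeword F n s) (i : 'I_n) (a : {ffun 'I_n -> 'I_s}) : F :=
  \sum_(j < s.-1) C i (inord j) (upd a i0 (oplus (a i0) j))
  + C i bl (upd a i0 (oplus (a i0) s.-1)).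

From HB Require Import structures.
From mathcomp Require Import all_boot all_order all_algebra.
From mathcomp Require Import zify.
Import GRing.Theory.
Local Open Scope ring_scope.
Set Implicit Arguments. Unset Strict Implicit.

(* Fix a failed node i0 and a digit vector a, and sum the parity checks of the
   s words a(i0, a_{i0} (+) j), reading column col j in the j-th one.  A node
   i <> i0 has the same digit a_i in all of them, so it contributes
   lam_{i,a_i}^t times its repair value, while node i0 contributes its s
   entries at the points lam_{i0, a_{i0} (+) j}.  These n - 1 + s evaluation
   points are distinct; for the difference of two codewords agreeing on the
   d helpers in R, only n - 1 - d + s = n - k unknowns remain, and the n - k
   checks t < n - k form an invertible Vandermonde system. *)

Lemma vandermonde_ker0 (R : idomainType) (I : finType) (S : {set I})
    (p x : I -> R) (N : nat) :
  (#|S| <= N)%N -> {in S &, injective p} ->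
  (forall t, (t < N)%N -> \sum_(l in S) p l ^+ t * x l = 0) ->
  {in S, forall l, x l = 0}.
Proof.
move=> leSN p_inj px0 l0 l0S.
pose q := \prod_(l in S :\ l0) ('X - (p l)%:P).
have size_q : (size q <= N)%N.
  rewrite /q -big_enum size_prod_XsubC -cardE.
  by move: leSN; rewrite (cardsD1 l0 S) l0S.
have q_root l : l \in S :\ l0 -> q.[p l] = 0.
  by move=> lS; rewrite /q horner_prod (bigD1 l) //= hornerXsubC subrr mul0r.
have q_l0 : q.[p l0] != 0.
  rewrite /q horner_prod; apply/prodf_neq0 => l /[!inE] /andP[ll0 lS].
  rewrite hornerXsubC subr_eq0 eq_sym; apply: contra ll0 => /eqP pl.
  by rewrite (p_inj _ _ lS l0S pl).
have : \sum_(l in S) q.[p l] * x l = 0.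
  under eq_bigr do rewrite horner_coef mulr_suml.
  rewrite exchange_big big1 // => t _.
  under eq_bigr do rewrite -mulrA.
  by rewrite -mulr_sumr px0 ?mulr0 // (leq_trans (ltn_ord t)).
rewrite (bigD1 l0) //= big1 ?addr0 => [/eqP|l /andP[lS ll0]].
  by rewrite mulf_eq0 (negPf q_l0) => /eqP.
by rewrite q_root ?mul0r // !inE ll0.
Qed.

Lemma card_inl_set (T1 T2 : finType) (A : {set T1}) :
  #|[set l : T1 + T2 | if l is inl x then x \in A else true]| = (#|A| + #|T2|)%N.
Proof.
rewrite -sum1_card big_mkcond big_sumType /=.
under eq_bigr do rewrite inE; under [X in (_ + X)%N]eq_bigr do rewrite inE.
by rewrite -big_mkcond /= !sum1_card.
Qed.

Lemma oplus_inj s (x : 'I_s) : injective (fun j : 'I_s => oplus x j).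
Proof.
move=> j j' /(congr1 val) /= /eqP; rewrite eqn_modDl !modn_small // => /eqP.
exact: val_inj.
Qed.

Lemma oplus_onto s (x : 'I_s) (j : nat) :
  (j <= s)%N -> exists u : 'I_s, oplus u j = x.
Proof.
move=> le_js; have s_gt0 := ord_pos x.
exists (Ordinal (ltn_pmod (x + (s - j)) s_gt0)); apply: val_inj => /=.
by rewrite modnDml -addnA subnK // modnDr modn_small.
Qed.

Lemma upd_id n s (a : {ffun 'I_n -> 'I_s}) i u : upd a i u i = u.
Proof. by rewrite ffunE eqxx. Qed.

Lemma upd_updK n s (a : {ffun 'I_n -> 'I_s}) i u : upd (upd a i u) i (a i) = a.
Proof. by apply/ffunP => l; rewrite !ffunE; case: (l =P i) => [->|]. Qed.

Lemma in_code_sub (F : nzRingType) n k s (lam : 'I_n -> 'I_s -> F)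
    (C C' : codeword F n s) :
  in_code k lam C -> in_code k lam C' ->
  in_code k lam (fun i b a => C i b a - C' i b a).
Proof.
move=> hC hC' t lt_t b a; under eq_bigr do rewrite mulrBr.
by rewrite sumrB hC ?hC' ?subrr.
Qed.

Definition repair (F : nzRingType) n s (i0 : 'I_n) (col : nat -> 'I_s.+1)
    (C : codeword F n s) (i : 'I_n) (a : {ffun 'I_n -> 'I_s}) : F :=
  \sum_(j < s) C i (col j) (upd a i0 (oplus (a i0) j)).

Lemma repair_sub (F : nzRingType) n s i0 col (C C' : codeword F n s) i a :
  repair i0 col (fun i b a => C i b a - C' i b a) i a
  = repair i0 col C i a - repair i0 col C' i a.
Proof. by rewrite /repair -sumrB. Qed.

Definition rep_col s (bl : 'I_s.+1) (j : nat) : 'I_s.+1 :=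
  if (j < s.-1)%N then inord j else bl.

Lemma rep_repair (F : nzRingType) n s (i0 : 'I_n) (bl : 'I_s.+1)
    (C : codeword F n s) i a :
  rep i0 bl C i a = repair i0 (rep_col bl) C i a.
Proof.
case: s bl C a => [|s] bl C a; first by case: (a i0).
rewrite /repair big_ord_recr /= /rep_col ltnn; congr (_ + _).
by apply: eq_bigr => j _; rewrite ltn_ord.
Qed.

Lemma rep_col_onto s (bl b : 'I_s.+1) : (0 < s)%N ->
  (b < s.-1)%N || (b == bl) -> exists j : 'I_s, rep_col bl j = b.
Proof.
move=> s_gt0 /orP[lt_b | /eqP ->].
  have lt_bs := leq_trans lt_b (leq_pred s).
  by exists (Ordinal lt_bs); rewrite /rep_col lt_b inord_val.
have lt_s : (s.-1 < s)%N by rewrite ltn_predL.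
by exists (Ordinal lt_s); rewrite /rep_col ltnn.
Qed.

Section Repair.

Variables (F : fieldType) (n k s : nat) (lam : 'I_n -> 'I_s -> F).
Hypothesis lam_inj : forall i j i' j', lam i j = lam i' j' -> i = i' /\ j = j'.
Variables (i0 : 'I_n) (col : nat -> 'I_s.+1).

Lemma repair_power_sums (D : codeword F n s) (a : {ffun 'I_n -> 'I_s}) t :
  in_code k lam D -> (t < n - k)%N ->
  \sum_(j < s) lam i0 (oplus (a i0) j) ^+ t * D i0 (col j) (upd a i0 (oplus (a i0) j))
  + \sum_(i | i != i0) lam i (a i) ^+ t * repair i0 col D i a = 0.
Proof.
move=> D_code lt_t.
pose a_ (j : 'I_s) := upd a i0 (oplus (a i0) j).
have E : \sum_(j < s) \sum_(i < n) lam i (a_ j i) ^+ t * D i (col j) (a_ j) = 0.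
  by apply: big1 => j _; apply: D_code.
rewrite exchange_big (bigD1 i0) //= in E; rewrite -[RHS]E; congr (_ + _).
  by apply: eq_bigr => j _; rewrite upd_id.
apply: eq_bigr => i ne_i; rewrite /repair mulr_sumr; apply: eq_bigr => j _.
by rewrite ffunE (negPf ne_i).
Qed.

Variable (R : {set 'I_n}).
Hypotheses (i0_notin_R : i0 \notin R) (card_R : (n - #|R|.+1 + s <= n - k)%N).

Lemma repair_kernel_at (D : codeword F n s) (a : {ffun 'I_n -> 'I_s}) :
  in_code k lam D -> (forall i, i \in R -> repair i0 col D i a = 0) ->
  (forall j : 'I_s, D i0 (col j) (upd a i0 (oplus (a i0) j)) = 0) /\
  (forall i, i \notin R -> i != i0 -> repair i0 col D i a = 0).
Proof.
move=> D_code D_R.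
pose A := ~: (i0 |: R).
pose S := [set l : 'I_n + 'I_s | if l is inl i then i \in A else true].
pose p (l : 'I_n + 'I_s) := match l with
  | inl i => lam i (a i)
  | inr j => lam i0 (oplus (a i0) j) end.
pose x (l : 'I_n + 'I_s) := match l with
  | inl i => repair i0 col D i a
  | inr j => D i0 (col j) (upd a i0 (oplus (a i0) j)) end.
have card_S : (#|S| <= n - k)%N.
  by rewrite card_inl_set !card_ord cardsCs setCK card_ord cardsU1 i0_notin_R.
have p_inj : {in S &, injective p}.
  move=> [i|j] [i'|j']; rewrite !inE => iA i'A.
  - by case/lam_inj => ->.
  - by case/lam_inj => eq_i; rewrite eq_i eqxx in iA.
  - by case/lam_inj => eq_i; rewrite -eq_i eqxx in i'A.
  - by case/lam_inj => _ /oplus_inj ->.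
have px0 t : (t < n - k)%N -> \sum_(l in S) p l ^+ t * x l = 0.
  move=> lt_t; rewrite -[RHS](repair_power_sums a D_code lt_t).
  rewrite big_mkcond big_sumType /= addrC.
  congr (_ + _); first by apply: eq_bigr => j _; rewrite inE.
  rewrite [RHS]big_mkcond; apply: eq_bigr => i _; rewrite !inE negb_or.
  by case: (i \in R) (D_R i) => [->|_]; rewrite ?mulr0 ?andbF ?andbT ?if_same.
have x0 := vandermonde_ker0 card_S p_inj px0.
split => [j | i iR ne_i]; first by apply: (x0 (inr j)); rewrite inE.
by apply: (x0 (inl i)); rewrite !inE negb_or ne_i iR.
Qed.

Lemma repair_kernel (D : codeword F n s) :
  in_code k lam D -> (forall a i, i \in R -> repair i0 col D i a = 0) ->
  (forall (j : 'I_s) a, D i0 (col j) a = 0) /\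
  (forall a i, i \notin R -> i != i0 -> repair i0 col D i a = 0).
Proof.
move=> D_code D_R; split => [j a | a]; last first.
  by case: (repair_kernel_at D_code (D_R a)).
have [u eq_u] := oplus_onto (a i0) (ltnW (ltn_ord j)).
have [/(_ j) + _] := repair_kernel_at D_code (D_R (upd a i0 u)).
by rewrite upd_id eq_u upd_updK.
Qed.

Lemma repair_determined (C C' : codeword F n s) :
  in_code k lam C -> in_code k lam C' ->
  (forall a i, i \in R -> repair i0 col C i a = repair i0 col C' i a) ->
  (forall (j : 'I_s) a, C i0 (col j) a = C' i0 (col j) a) /\
  (forall a i, i \notin R -> i != i0 -> repair i0 col C i a = repair i0 col C' i a).
Proof.
move=> hC hC' eq_R.
have [a i iR|eq_col eq_rep] := repair_kernel (in_code_sub hC hC').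
  by rewrite repair_sub eq_R ?subrr.
by split=> [j a | a i iR ne_i]; apply/eqP; rewrite -subr_eq0 -?repair_sub;
  apply/eqP; [apply: eq_col | apply: eq_rep].
Qed.

End Repair.

Lemma rep_determined (F : fieldType) n k s (lam : 'I_n -> 'I_s -> F)
    (i0 : 'I_n) (bl : 'I_s.+1) (R : {set 'I_n}) (C C' : codeword F n s) :
  (forall i j i' j', lam i j = lam i' j' -> i = i' /\ j = j') ->
  i0 \notin R -> (n - #|R|.+1 + s <= n - k)%N ->
  in_code k lam C -> in_code k lam C' ->
  (forall a i, i \in R -> rep i0 bl C i a = rep i0 bl C' i a) ->
  (forall (j : 'I_s) a, C i0 (rep_col bl j) a = C' i0 (rep_col bl j) a) /\
  (forall a i, i \notin R -> i != i0 -> rep i0 bl C i a = rep i0 bl C' i a).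
Proof.
move=> lam_inj i0_notin_R card_R hC hC' eq_R.
have [a i iR|eq_col eq_rep] :=
  repair_determined (col := rep_col bl) lam_inj i0_notin_R card_R hC hC'.
  by rewrite -!rep_repair eq_R.
by split=> // a i iR ne_i; rewrite !rep_repair eq_rep.
Qed.

Theorem mainTheorem4 (n k d : nat)
  (hk1 : (1 <= k)%N) (hkd : (k <= d)%N) (hdn : (d <= n - 2)%N)
  (F : finFieldType) (hF : ((d + 1 - k) * n <= #|F|)%N)
  (lam : 'I_n -> 'I_(d + 1 - k) -> F)
  (hlam : forall i j i' j', lam i j = lam i' j' -> i = i' /\ j = j')
  (i1 i2 : 'I_n) (hi1 : val i1 = 0%N) (hi2 : val i2 = 1%N)
  (R : {set 'I_n}) (hR1 : i1 \notin R) (hR2 : i2 \notin R) (hRd : #|R| = d)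
  (C C' : codeword F n (d + 1 - k))
  (hC : in_code k lam C) (hC' : in_code k lam C') :
  ((forall a, forall i, i \in R ->
       rep i1 (inord (d + 1 - k).-1) C i a = rep i1 (inord (d + 1 - k).-1) C' i a) ->
     (forall (b : 'I_(d + 1 - k).+1) a, (val b < d + 1 - k)%N -> C i1 b a = C' i1 b a)
     /\ (forall a, rep i1 (inord (d + 1 - k).-1) C i2 a
                   = rep i1 (inord (d + 1 - k).-1) C' i2 a))
  /\
  ((forall a, forall i, i \in R ->
       rep i2 ord_max C i a = rep i2 ord_max C' i a) ->
     (forall (b : 'I_(d + 1 - k).+1) a, val b != (d + 1 - k).-1 -> C i2 b a = C' i2 b a)
     /\ (forall a, rep i2 ord_max C i1 a = rep i2 ord_max C' i1 a)).
Proof.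
set s := (d + 1 - k)%N.
have s_gt0 : (0 < s)%N by rewrite /s; lia.
have card_R : (n - #|R|.+1 + s <= n - k)%N by rewrite hRd /s; lia.
have ne_i12 : i1 != i2 by apply/eqP => /(congr1 val); rewrite hi1 hi2.
split=> /(rep_determined hlam _ card_R hC hC') [//|eq_col eq_rep].
- split=> [b a lt_b|a]; last by rewrite eq_rep // eq_sym.
  have [|j <-] := rep_col_onto (bl := inord s.-1) (b := b) s_gt0; last exact: eq_col.
  have lt_s : (s.-1 < s.+1)%N by rewrite ltnS leq_pred.
  by rewrite -val_eqE /= inordK // orbC -leq_eqVlt -ltnS prednK.
- split=> [b a ne_b|a]; last by rewrite eq_rep.
  have [|j <-] := rep_col_onto (bl := ord_max) (b := b) s_gt0; last exact: eq_col.
  by move: ne_b; rewrite -val_eqE; case: b => m /= lt_m; lia.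
Qed.
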